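(* Let $k\ge 1$, $0\le r<k$ and $n\ge1$ be integers, and let $$A_n(k,r,x;q)=\left(q^{(k-r-1)j}\begin{bmatrix} i-k+r+1\\ j\end{bmatrix}_q x^k+q^{(k-r)j}\begin{bmatrix} i+r+1\\ j+1\end{bmatrix}_q\right)_{i,j=0}^{n-1}.$$ Then $x^r\det A_n(k,r,x;q)=F^{(k)}_{kn+r}(x;q)$.
   Context: Here $q$ is an indeterminate and all quantities lie in $\mathbb{Q}(q)[x]$. The $q$-binomial coefficient is defined for integers $m$ (possibly negative) and $j$ by $\begin{bmatrix} m\\ j\end{bmatrix}_q=\prod_{t=0}^{j-1}\frac{1-q^{m-t}}{1-q^{t+1}}$ if $j\ge0$ and $0$ if $j<0$. For an integer $k\ge1$, the $q$-Fibonacci polynomials $F^{(k)}_n(x;q)$ ($n\ge0$) are defined by $F^{(k)}_n(x;q)=x^n$ for $0\le n<k$ and $F^{(k)}_{n+k}(x;q)=xF^{(k)}_{n+k-1}(x;q)+q^nF^{(k)}_n(x;q)$ for $n\ge0$. *)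

From HB Require Import structures.
From mathcomp Require Import all_boot all_order all_algebra.
Set Implicit Arguments. Unset Strict Implicit. Unset Printing Implicit Defensive.
Import Order.TTheory GRing.Theory Num.Theory.
Local Open Scope ring_scope.

Definition Kq : fieldType := {fraction {poly rat}}.

Definition qq : Kq := tofrac ('X : {poly rat}).

Definition qbinom (m : int) (j : nat) : Kq :=
  \prod_(t < j) ((1 - qq ^ (m - (t : nat)%:Z)) / (1 - qq ^+ t.+1)).

Definition Amat (k r n : nat) : 'M[{poly Kq}]_n :=
  \matrix_(i < n, j < n)
    ((qq ^+ ((k - r - 1) * j) * qbinom ((i : nat)%:Z - k%:Z + r%:Z + 1) j)%:P
       * 'X ^+ k
     + (qq ^+ ((k - r) * j) * qbinom ((i : nat)%:Z + r%:Z + 1) j.+1)%:P).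

From HB Require Import structures.
From mathcomp Require Import all_boot all_order all_algebra.
From mathcomp Require Import ring zify.
Set Implicit Arguments.
Unset Strict Implicit.
Unset Printing Implicit Defensive.
Import Order.TTheory GRing.Theory Num.Theory.
Local Open Scope ring_scope.

(* Let Y be an auxiliary variable over Q(q)[x].  Up to the factor
   q^(r j), column j of A_n(k,r,x;q) consists of the values at Y = q^(r+i) of
   a polynomial colpoly j of degree j+1 in Y (a combination of
   prod_(t<j) (Y - q^(k-1+t)) and prod_(t<=j) (Y - q^(t-1))).  Factoring out
   the Vandermonde matrix of the nodes q^(r+i) leaves the determinant of the
   coefficient matrix of colpoly 0, ..., colpoly (n-1) and of
   prod_(t<n) (Y - q^(r+t)).  That determinant is linear in its last column
   and satisfies a two-term recurrence in n (expansion along the last row);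
   since consecutive node polynomials differ by a multiple of a shorter one,
   this turns into the recurrence of F^(k). *)

Section CoefficientMatrix.
Variable R : comNzRingType.

Lemma det_unit_lastcol n (A : 'M[R]_n.+1) :
  (forall i, A i ord_max = (i == ord_max)%:R) ->
  \det A = \det (row' ord_max (col' ord_max A)).
Proof.
move=> A_max; rewrite (expand_det_col _ ord_max) (bigD1 ord_max) //= big1.
  by rewrite A_max eqxx mul1r addr0 /cofactor addnn -signr_odd odd_double mul1r.
by move=> i /negPf i_max; rewrite A_max i_max mul0r.
Qed.

Lemma det_unit_lastrow n (A : 'M[R]_n.+1) :
  (forall j, A ord_max j = (j == ord_max)%:R) ->
  \det A = \det (row' ord_max (col' ord_max A)).
Proof.
move=> A_max; rewrite -det_tr det_unit_lastcol => [|i]; last by rewrite mxE A_max.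
by rewrite -det_tr; congr (\det _); apply/matrixP => i j; rewrite !mxE.
Qed.

Definition coefmx (f : nat -> {poly R}) n (p : {poly R}) : 'M[R]_n.+1 :=
  \matrix_(s, j) (if j == ord_max then p`_s else (f j)`_s).

Section Linearity.
Variables (f : nat -> {poly R}) (n : nat).

Lemma det_coefmxE p :
  \det (coefmx f n p) = \sum_(s < n.+1) p`_s * cofactor (coefmx f n 0) s ord_max.
Proof.
rewrite (expand_det_col _ ord_max); apply: eq_bigr => s _.
rewrite mxE eqxx; congr (_ * (_ * \det _)).
by apply/matrixP => i j; rewrite !mxE lift_eqF.
Qed.

Lemma det_coefmxD p p' :
  \det (coefmx f n (p + p')) = \det (coefmx f n p) + \det (coefmx f n p').
Proof.
by rewrite !det_coefmxE -big_split; apply: eq_bigr => s _; rewrite coefD mulrDl.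
Qed.

Lemma det_coefmxB p p' :
  \det (coefmx f n (p - p')) = \det (coefmx f n p) - \det (coefmx f n p').
Proof.
by rewrite !det_coefmxE -sumrB; apply: eq_bigr => s _; rewrite coefB mulrBl.
Qed.

Lemma det_coefmxCM a p : \det (coefmx f n (a%:P * p)) = a * \det (coefmx f n p).
Proof.
by rewrite !det_coefmxE big_distrr /=; apply: eq_bigr => s _; rewrite coefCM mulrA.
Qed.

End Linearity.

Lemma det_coefmxS (f : nat -> {poly R}) n p :
  (forall j, size (f j) <= j.+2)%N ->
  \det (coefmx f n.+1 p) =
    - (f n)`_n.+1 * \det (coefmx f n p) + p`_n.+1 * \det (coefmx f n (f n)).
Proof.
move=> size_f.
have f_hi j s : (j.+1 < s)%N -> (f j)`_s = 0.
  by move=> lt_js; rewrite nth_default // (leq_trans (size_f j)).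
have widen_max (j : 'I_n.+1) : (widen_ord (leqnSn n.+1) j == ord_max) = false.
  exact: ltn_eqF (ltn_ord j).
rewrite (expand_det_row _ ord_max) !big_ord_recr /= big1 ?add0r => [|i _]; last first.
  by rewrite mxE widen_max f_hi ?mul0r //= ltnS.
rewrite !mxE widen_max eqxx /cofactor.
have -> : row' ord_max (col' (widen_ord (leqnSn n.+1) ord_max) (coefmx f n.+1 p))
    = coefmx f n p.
  apply/matrixP => i j; rewrite !mxE.
  have [->|j_ne] := eqVneq j ord_max.
    have -> : lift (widen_ord (leqnSn n.+1) ord_max) ord_max = ord_max.
      by apply/val_inj; rewrite /= /bump leqnn.
    by rewrite eqxx lift_max.
  have j_lt_n : (j < n)%N by rewrite ltn_neqAle -ltnS ltn_ord andbT.
  have -> : lift (widen_ord (leqnSn n.+1) ord_max) j = widen_ord (leqnSn n.+1) j.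
    by apply/val_inj; rewrite /= /bump leqNgt j_lt_n.
  by rewrite widen_max lift_max.
have -> : row' ord_max (col' ord_max (coefmx f n.+1 p)) = coefmx f n (f n).
  apply/matrixP => i j; rewrite !mxE lift_eqF !lift_max.
  by case: eqVneq => [->|].
have sign_even m : (-1) ^+ (m + m) = 1 :> R by rewrite addnn -signr_odd odd_double.
by rewrite /= addSn exprS !sign_even mulr1 mulN1r !mul1r mulrN mulNr.
Qed.

(* Border the Vandermonde matrix by the last unit row: its product with the
   coefficient matrix has last column (p.[z 0], ..., p.[z (n-1)], p`_n), which
   is the last unit column for p = prod_i (X - z i). *)
Lemma det_horner_mx n (f : nat -> {poly R}) (z : nat -> R) :
  (forall j, j < n -> size (f j) <= n.+1)%N ->
  \det (\matrix_(i < n, j < n) (f j).[z i]) =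
  \det (\matrix_(i < n, s < n) z i ^+ s) *
  \det (coefmx f n (\prod_(i < n) ('X - (z i)%:P))).
Proof.
move=> size_f; set p := \prod_(i < n) _.
have size_p : size p = n.+1.
  by rewrite size_prod_XsubC /index_enum; unlock; rewrite -enumT size_enum_ord.
have p_lead : p`_n = 1.
  by have := lead_coef_prod_XsubC (index_enum 'I_n) predT z; rewrite /lead_coef size_p.
have p_root i : (i < n)%N -> p.[z i] = 0.
  move=> lt_in; rewrite /p horner_prod (bigD1 (Ordinal lt_in)) //=.
  by rewrite hornerXsubC subrr mul0r.
pose E : 'M[R]_n.+1 :=
  \matrix_(i, s) (if i == ord_max then (s == ord_max)%:R else z i ^+ s).
have det_E : \det E = \det (\matrix_(i < n, s < n) z i ^+ s).
  rewrite det_unit_lastrow => [|j]; last by rewrite mxE eqxx.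
  by congr (\det _); apply/matrixP => i j; rewrite !mxE lift_eqF !lift_max.
rewrite -det_E -det_mulmx det_unit_lastcol => [|i]; last first.
  rewrite !mxE; have [->|i_ne] := eqVneq i ord_max.
    rewrite (bigD1 ord_max) //= big1 ?mxE ?eqxx ?mul1r ?addr0 ?p_lead // => s /negPf s_ne.
    by rewrite !mxE eqxx s_ne mul0r.
  under eq_bigr do rewrite !mxE (negPf i_ne).
  have lt_in : (i < n)%N by rewrite ltn_neqAle -ltnS ltn_ord andbT.
  rewrite -[RHS](p_root _ lt_in) (@horner_coef_wide _ n.+1) ?size_p //.
  by apply: eq_bigr => s _; rewrite eqxx mulrC.
congr (\det _); apply/matrixP => i j; rewrite !mxE (@horner_coef_wide _ n.+1) ?size_f //.
by apply: eq_bigr => s _; rewrite !mxE !lift_eqF !lift_max mulrC.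
Qed.

End CoefficientMatrix.

Section QFibonacciDeterminant.
Variables (F : fieldType) (q : F).
Hypothesis q_neq0 : q != 0.
Hypothesis q_not_root1 : forall m, 1 - q ^+ m.+1 != 0.

Definition qbinomial (m : int) (j : nat) : F :=
  \prod_(t < j) ((1 - q ^ (m - (t : nat)%:Z)) / (1 - q ^+ t.+1)).

Definition qfactor (c : F) t := - (c * q ^+ t)^-1 / (1 - q ^+ t.+1).

Definition qvdm_step n := \prod_(i < n) (q ^+ n - q ^+ i).

Lemma qvdm_stepS n : qvdm_step n.+1 = (q ^+ n.+1 - 1) * (q ^+ n * qvdm_step n).
Proof.
rewrite /qvdm_step big_ord_recl expr0; congr (_ * _).
rewrite (eq_bigr (fun i : 'I_n => q * (q ^+ n - q ^+ i))) => [|i _].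
  by rewrite big_split /= prodr_const card_ord.
by rewrite lift0 !exprS mulrBr.
Qed.

Lemma qvdm_step_qfactor c n : c != 0 ->
  qvdm_step n * \prod_(t < n) qfactor c t = c ^- n.
Proof.
move=> c_neq0; elim: n => [|n IHn]; first by rewrite /qvdm_step !big_ord0 mulr1 invr1.
rewrite qvdm_stepS big_ord_recr /= [c ^+ n.+1]exprSr invfM -IHn /qfactor.
have := q_not_root1 n; have := expf_neq0 n q_neq0 => qn_neq0 q_n1.
field; by rewrite c_neq0 qn_neq0 q_n1.
Qed.

Lemma prod_qfactor_qbinomial c z m j : c != 0 -> q ^ m * c = z ->
  \prod_(t < j) qfactor c t * \prod_(t < j) (z - c * q ^+ t) = qbinomial m j.
Proof.
move=> c_neq0 qm_z; rewrite -big_split; apply: eq_bigr => t _ /=.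
rewrite expfzDr // -exprnN -qm_z /qfactor.
have := q_not_root1 t; have := expf_neq0 t q_neq0 => qt_neq0 q_t1.
field; by rewrite c_neq0 qt_neq0 q_t1.
Qed.

Section Fibonacci.
Variable k : nat.
Hypothesis k_gt0 : (0 < k)%N.

Local Notation R := {poly F}.

Definition qroots (c : F) n : {poly R} := \prod_(t < n) ('X - (c * q ^+ t)%:P%:P).

Lemma size_qroots c n : size (qroots c n) = n.+1.
Proof. by rewrite size_prod_XsubC /index_enum; unlock; rewrite -enumT size_enum_ord. Qed.

Lemma coef_qroots_top c n : (qroots c n)`_n = 1.
Proof.
have := lead_coef_prod_XsubC (index_enum 'I_n) predT (fun t => (c * q ^+ t)%:P).
by rewrite /lead_coef -/(qroots c n) size_qroots.
Qed.

Lemma coef_qroots_hi c n s : (n < s)%N -> (qroots c n)`_s = 0.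
Proof. by move=> lt_ns; rewrite nth_default // size_qroots. Qed.

Lemma qroots_sub c n :
  qroots (c * q) n.+1 - qroots c n.+1 = (c - c * q ^+ n.+1)%:P%:P * qroots (c * q) n.
Proof.
have -> : qroots (c * q) n.+1 = qroots (c * q) n * ('X - (c * q ^+ n.+1)%:P%:P).
  by rewrite /qroots big_ord_recr /= -mulrA -exprS.
have -> : qroots c n.+1 = ('X - c%:P%:P) * qroots (c * q) n.
  rewrite /qroots big_ord_recl expr0 mulr1; congr (_ * _).
  by apply: eq_bigr => t _; rewrite lift0 exprS mulrA.
by rewrite !rmorphB /=; ring.
Qed.

Definition xweight n := q ^+ ((k - 1) * n) * \prod_(t < n) qfactor (q ^+ (k - 1)) t.
Definition cweight n := q ^+ (k * n) * \prod_(t < n.+1) qfactor q^-1 t.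

Definition colpoly j : {poly R} :=
  ('X ^+ k * (xweight j)%:P)%:P * qroots (q ^+ (k - 1)) j
  + (cweight j)%:P%:P * qroots q^-1 j.+1.

Local Notation coldet n p := (\det (coefmx colpoly n p)).

Lemma size_colpoly j : (size (colpoly j) <= j.+2)%N.
Proof.
rewrite /colpoly !mul_polyC (leq_trans (size_polyD _ _)) // geq_max.
by rewrite !(leq_trans (size_scale_leq _ _)) ?size_qroots.
Qed.

Lemma coef_colpoly_top n : (colpoly n)`_n.+1 = (cweight n)%:P.
Proof. by rewrite coefD !coefCM coef_qroots_hi // coef_qroots_top mulr0 mulr1 add0r. Qed.

Lemma coldetS n p :
  coldet n.+1 p = - (cweight n)%:P * coldet n p + p`_n.+1 * coldet n (colpoly n).
Proof. by rewrite det_coefmxS ?coef_colpoly_top //; exact: size_colpoly. Qed.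

Lemma coldet_qroots_sub c n :
  coldet n.+1 (qroots (c * q) n.+1) - coldet n.+1 (qroots c n.+1) =
  ((c * q ^+ n.+1 - c) * cweight n)%:P * coldet n (qroots (c * q) n).
Proof.
rewrite -det_coefmxB qroots_sub coldetS coefCM coef_qroots_hi // mulr0 mul0r addr0.
by rewrite det_coefmxCM mulrA -rmorphN -rmorphM /=; congr (_%:P * _); ring.
Qed.

Lemma coldet_qroots_inv n :
  coldet n.+1 (qroots q^-1 n.+1) =
  'X ^+ k * (xweight n)%:P * coldet n (qroots (q ^+ (k - 1)) n).
Proof.
rewrite coldetS coef_qroots_top mul1r det_coefmxD !det_coefmxCM.
by rewrite addrCA mulNr addNr addr0.
Qed.

Definition qvdm n : R := \det (\matrix_(i < n, s < n) (q ^+ (i * s))%:P).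

Lemma qvdmS n : qvdm n.+1 = qvdm n * (qvdm_step n)%:P.
Proof.
have qvdmE m : qvdm m =
    \prod_(i < m) \prod_(j < m | (i < j)%N) ((q ^+ j)%:P - (q ^+ i)%:P).
  have := det_Vandermonde (\row_(s < m) (q ^+ s)%:P : 'rV[R]_m).
  under eq_bigr do under eq_bigr do rewrite !mxE.
  move=> <-; congr (\det _); apply/matrixP => i j.
  by rewrite !mxE -rmorphXn /= -exprM mulnC.
rewrite !qvdmE big_ord_recr /= [X in _ * X]big1 ?mulr1 => [|j]; last first.
  by rewrite ltnNge -ltnS ltn_ord.
rewrite /qvdm_step rmorph_prod -big_split /=; apply: eq_bigr => i _.
by rewrite big_mkcond big_ord_recr /= -big_mkcond /= ltn_ord rmorphB.
Qed.

Lemma qvdm_step_xweight n : qvdm_step n * xweight n = 1.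
Proof.
rewrite /xweight mulrCA qvdm_step_qfactor ?expf_neq0 //.
by rewrite exprM mulfV // !expf_neq0.
Qed.

Lemma qvdm_step_cweight n : qvdm_step n * (q ^+ n.+1 - 1) * cweight n = q ^+ (k * n).+1.
Proof.
have := qvdm_step_qfactor n.+1 (invr_neq0 q_neq0).
rewrite qvdm_stepS exprVn invrK /cweight => step_eq.
apply: (mulIf (expf_neq0 n q_neq0)); move: step_eq; set P := \prod_(t < _) _ => step_eq.
transitivity (q ^+ (k * n) * ((q ^+ n.+1 - 1) * (q ^+ n * qvdm_step n) * P)); first by ring.
by rewrite step_eq -!exprD; congr (q ^+ _); lia.
Qed.

Definition delta r n := qvdm n * coldet n (qroots (q ^+ r) n).

Lemma delta0 r : delta r 0 = 1.
Proof. by rewrite /delta /qvdm det_mx00 mul1r det_mx11 mxE /= /qroots big_ord0 coefC. Qed.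

Lemma deltaSS r n :
  delta r.+1 n.+1 = delta r n.+1 + (q ^+ (k * n + r.+1))%:P * delta r.+1 n.
Proof.
have := coldet_qroots_sub (q ^+ r) n; rewrite -exprSr => sub_eq.
have weight : qvdm_step n * ((q ^+ r * q ^+ n.+1 - q ^+ r) * cweight n) =
    q ^+ (k * n + r.+1).
  transitivity (q ^+ r * (qvdm_step n * (q ^+ n.+1 - 1) * cweight n)); first by ring.
  by rewrite qvdm_step_cweight -exprD; congr (q ^+ _); lia.
rewrite /delta -[coldet n.+1 (qroots _ n.+1)](subrK (coldet n.+1 (qroots (q ^+ r) n.+1))).
by rewrite sub_eq qvdmS -weight rmorphM /=; ring.
Qed.

Lemma delta0S n :
  delta 0 n.+1 = 'X ^+ k * delta (k - 1) n + (q ^+ (k * n))%:P * delta 0 n.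
Proof.
have := coldet_qroots_sub q^-1 n; rewrite mulVf // => sub_eq.
have weight : qvdm_step n * ((q^-1 * q ^+ n.+1 - q^-1) * cweight n) = q ^+ (k * n).
  transitivity (q^-1 * (qvdm_step n * (q ^+ n.+1 - 1) * cweight n)); first by ring.
  by rewrite qvdm_step_cweight exprS mulKf.
have xweight_eq : (qvdm_step n)%:P * (xweight n)%:P = 1 :> R.
  by rewrite -rmorphM qvdm_step_xweight.
rewrite /delta expr0 -[coldet n.+1 (qroots 1 n.+1)](subrK (coldet n.+1 (qroots q^-1 n.+1))).
rewrite sub_eq coldet_qroots_inv qvdmS -weight.
set Vn := qvdm n; set Psi1 := coldet n (qroots 1 n).
set Psi2 := coldet n (qroots (q ^+ (k - 1)) n).
transitivity ('X ^+ k * (Vn * Psi2) * ((qvdm_step n)%:P * (xweight n)%:P)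
  + (qvdm_step n * ((q^-1 * q ^+ n.+1 - q^-1) * cweight n))%:P * (Vn * Psi1)).
  by rewrite rmorphM /=; ring.
by rewrite xweight_eq mulr1.
Qed.

Lemma Xdelta_qfibonacci (f : nat -> R) :
  (forall m, (m < k)%N -> f m = 'X ^+ m) ->
  (forall m, f (m + k)%N = 'X * f (m + k - 1)%N + (q ^+ m)%:P * f m) ->
  forall n r, (r < k)%N -> 'X ^+ r * delta r n = f (k * n + r)%N.
Proof.
move=> f_init f_rec; elim=> [|n IHn] r.
  by move=> lt_rk; rewrite delta0 mulr1 muln0 f_init.
elim: r => [|r IHr] lt_rk.
  have lt_k1k : (k - 1 < k)%N by rewrite subn1 prednK.
  rewrite expr0 mul1r delta0S.
  have -> : 'X ^+ k = 'X * 'X ^+ (k - 1) :> R by rewrite -exprS subn1 prednK.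
  have := IHn 0%N k_gt0; rewrite expr0 mul1r addn0 => ->.
  rewrite -mulrA (IHn _ lt_k1k).
  have -> : (k * n.+1 + 0 = k * n + k)%N by rewrite mulnS; lia.
  by rewrite f_rec; congr (_ * f _ + _); lia.
rewrite deltaSS mulrDr [_ * (_%:P * _)]mulrCA (IHn _ lt_rk).
rewrite exprS -mulrA (IHr (ltnW lt_rk)).
have -> : (k * n.+1 + r.+1 = (k * n + r.+1) + k)%N by rewrite mulnS; lia.
by rewrite f_rec; congr (_ * f _ + _); rewrite mulnS; lia.
Qed.

Definition Amat_at r n : 'M[R]_n :=
  \matrix_(i < n, j < n)
    ((q ^+ ((k - r - 1) * j) * qbinomial ((i : nat)%:Z - k%:Z + r%:Z + 1) j)%:P
       * 'X ^+ k
     + (q ^+ ((k - r) * j) * qbinomial ((i : nat)%:Z + r%:Z + 1) j.+1)%:P).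

Lemma horner_qroots c n z : (qroots c n).[z%:P] = (\prod_(t < n) (z - c * q ^+ t))%:P.
Proof.
rewrite horner_prod rmorph_prod; apply: eq_bigr => t _.
by rewrite hornerXsubC rmorphB.
Qed.

Lemma horner_colpoly r n (i j : 'I_n) : (r < k)%N ->
  (colpoly j).[(q ^+ (r + i))%:P] = Amat_at r n i j * (q ^+ (r * j))%:P.
Proof.
move=> lt_rk.
have x_part : xweight j * \prod_(t < j) (q ^+ (r + i) - q ^+ (k - 1) * q ^+ t) =
    q ^+ ((k - r - 1) * j) * qbinomial (i%:Z - k%:Z + r%:Z + 1) j * q ^+ (r * j).
  rewrite /xweight -mulrA (prod_qfactor_qbinomial (m := i%:Z - k%:Z + r%:Z + 1));
    rewrite ?expf_neq0 //; last first.
    by rewrite exprnP -expfzDr // exprnP; congr (q ^ _); lia.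
  by rewrite mulrAC -exprD -mulnDl; congr (q ^+ (_ * _) * _); lia.
have c_part : cweight j * \prod_(t < j.+1) (q ^+ (r + i) - q^-1 * q ^+ t) =
    q ^+ ((k - r) * j) * qbinomial (i%:Z + r%:Z + 1) j.+1 * q ^+ (r * j).
  rewrite /cweight -mulrA (prod_qfactor_qbinomial (m := i%:Z + r%:Z + 1));
    rewrite ?invr_neq0 //; last first.
    by rewrite -exprN1 -expfzDr // exprnP; congr (q ^ _); lia.
  by rewrite mulrAC -exprD -mulnDl; congr (q ^+ (_ * _) * _); lia.
rewrite /colpoly hornerD !hornerCM !horner_qroots mxE -mulrA -!rmorphM x_part c_part.
by rewrite !rmorphM /=; ring.
Qed.

Lemma det_Amat_at r n : (r < k)%N -> \det (Amat_at r n) = delta r n.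
Proof.
move=> lt_rk; pose d := \row_(j < n) (q ^+ (r * j))%:P : 'rV[R]_n.
have d_neq0 : \det (diag_mx d) != 0.
  by rewrite det_diag; apply/prodf_neq0 => j _; rewrite mxE polyC_eq0 expf_neq0.
apply: (mulIf d_neq0); rewrite -det_mulmx mul_mx_diag.
have -> : \matrix_(i, j) (Amat_at r n i j * d 0 j) =
    \matrix_(i < n, j < n) (colpoly j).[(q ^+ (r + i))%:P].
  by apply/matrixP => i j; rewrite [RHS]mxE horner_colpoly // [LHS]mxE [d _ _]mxE.
rewrite (@det_horner_mx _ n colpoly (fun i => (q ^+ (r + i))%:P)) => [|j lt_jn]; last first.
  exact: leq_trans (size_colpoly j) _.
have -> : \prod_(i < n) ('X - ((q ^+ (r + i))%:P)%:P) = qroots (q ^+ r) n.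
  by apply: eq_bigr => i _; rewrite exprD.
have -> : \matrix_(i < n, s < n) ((q ^+ (r + i))%:P : R) ^+ s =
    \matrix_(i < n, s < n) (q ^+ (i * s))%:P *m diag_mx d.
  apply/matrixP => i s; rewrite mul_mx_diag !mxE -!rmorphXn -rmorphM /=.
  by rewrite -!exprM -exprD mulnDl addnC.
by rewrite det_mulmx /delta mulrAC.
Qed.

End Fibonacci.

End QFibonacciDeterminant.

Lemma qq_neq0 : qq != 0.
Proof. by rewrite /qq tofrac_eq0 polyX_eq0. Qed.

Lemma qq_not_root1 m : 1 - qq ^+ m.+1 != 0.
Proof.
rewrite /qq -tofracXn -tofrac1 -tofracB tofrac_eq0 subr_eq0 eq_sym.
by apply/negP => /eqP Xm_eq1; have := size_polyXn rat m.+1; rewrite Xm_eq1 size_poly1.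
Qed.

Theorem theorem5 (k r n : nat) (F : nat -> {poly Kq}) :
  (1 <= k)%N -> (r < k)%N -> (1 <= n)%N ->
  (forall m : nat, (m < k)%N -> F m = 'X ^+ m) ->
  (forall m : nat, F (m + k)%N = 'X * F (m + k - 1)%N + (qq ^+ m)%:P * F m) ->
  'X ^+ r * \det (Amat k r n) = F (k * n + r)%N.
Proof.
move=> k_gt0 lt_rk _ F_init F_rec.
have -> : Amat k r n = Amat_at qq k r n by [].
rewrite (det_Amat_at qq_neq0 qq_not_root1 k_gt0 n lt_rk).
exact (Xdelta_qfibonacci qq_neq0 qq_not_root1 k_gt0 F_init F_rec n lt_rk).
Qed.
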